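(* Let $\mathcal L=(\Sigma,X)$ be a language and $\Lambda$ a fuzzy theory in $\mathcal L$. Let $\mathscr F_\Lambda$ be a left adjoint of $\mathscr U_\Lambda:\mathbf{Mod}(\Lambda)\to\mathbf{Fuz}_H$ with unit $\eta$, let $\nabla(X)=(X,c_\bot)$ (constant membership $\bot$), and let $\iota_{nat}:X\to$ (underlying set of $\mathscr F_\Lambda(\nabla(X))$) be the underlying function of $\eta_{\nabla(X)}$. Then for every formula $\phi$ of $\mathcal L$: $\mathscr F_\Lambda(\nabla(X))\vDash_{\iota_{nat}}\phi$ if and only if $\vdash_\Lambda\phi$.
   Context: $H$ is a frame with bottom $\bot$. An $H$-fuzzy set is a pair $(A,\mu_A)$ of a set $A$ and a function $\mu_A:A\to H$; an arrow $f:(A,\mu_A)\to(B,\mu_B)$ is a function with $\mu_A(x)\le\mu_B(f(x))$; they form $\mathbf{Fuz}_H$. For $n\ge1$, $(A,\mu_A)^n=(A^n,\mu)$ with $\mu(a_1,\dots,a_n)=\bigwedge_i\mu_A(a_i)$. A signature $\Sigma=(O,\mathrm{ar},C)$ consists of a set $O$ of operation symbols with arity $\mathrm{ar}:O\to\{1,2,3,\dots\}$ and a set $C$ of constant symbols. A language is a pair $\mathcal L=(\Sigma,X)$ with $X$ a set of variables. $\mathrm{Terms}(\mathcal L)$ is the smallest set containing $X\sqcup C$ and containing $f(t_1,\dots,t_{\mathrm{ar}(f)})$ whenever $f\in O$ and all $t_i\in\mathrm{Terms}(\mathcal L)$. A formula is either an equation $s\equiv t$ ($s,t$ terms) or a membership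 proposition $\mathsf E_l(t)$ with $l\in H$ and $t$ a term. A sequent $\Gamma\vdash\psi$ is a pair of a (possibly infinite) set $\Gamma$ of formulas and a formula $\psi$; $\vdash\psi$ means $\emptyset\vdash\psi$. A fuzzy theory in $\mathcal L$ is a set of sequents. For $\sigma:X\to\mathrm{Terms}(\mathcal L)$, $t[\sigma]$ is simultaneous substitution, extended to formulas by $(s\equiv t)[\sigma]=(s[\sigma]\equiv t[\sigma])$, $\mathsf E_l(t)[\sigma]=\mathsf E_l(t[\sigma])$, and to sets of formulas elementwise. The rules of the fuzzy sequent calculus are (for all sets of formulas $\Gamma,\Delta,\Phi$, formulas $\phi,\psi$, terms, $l,l'\in H$): (A) $\Gamma\vdash\phi$ if $\phi\in\Gamma$; (Weak) from $\Gamma\vdash\phi$ infer $\Gamma\cup\Delta\vdash\phi$; (Cut) from $\Gamma\vdash\phi$ for all $\phi\in\Phi$ and $\Phi\vdash\psi$ infer $\Gamma\vdash\psi$; (Refl) $\Gamma\vdash s\equiv s$; (Sym) from $\Gamma\vdash s\equiv t$ infer $\Gamma\vdash t\equiv s$; (Trans) from $\Gamma\vdash s\equiv t$ and $\Gamma\vdash t\equiv u$ infer $\Gamma\vdash s\equiv u$; (Sub) from $\Gamma\vdash\psi$ infer $\Gamma[\sigma]\vdash\psi[\sigma]$ for any $\sigma:X\to\mathrm{Terms}(\mathcal L)$; (Cong) for $f\in O$ with $n=\mathrm{ar}(f)$, from $\Gamma\vdash t_i\equiv s_i$ ($i=1,\dots,n$) infer $\Gamma\vdash f(t_1,\dots,t_n)\equiv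 f(s_1,\dots,s_n)$; (Inf) $\Gamma\vdash\mathsf E_\bot(t)$; (Mon) from $\Gamma\vdash\mathsf E_l(t)$ infer $\Gamma\vdash\mathsf E_{l\wedge l'}(t)$; (Exp) for $f\in O$ with $n=\mathrm{ar}(f)$, from $\Gamma\vdash\mathsf E_{l_i}(t_i)$ ($i=1,\dots,n$) infer $\Gamma\vdash\mathsf E_{l_1\wedge\dots\wedge l_n}(f(t_1,\dots,t_n))$; (Sup) for $S\subseteq H$, from $\Gamma\vdash\mathsf E_l(t)$ for all $l\in S$ infer $\Gamma\vdash\mathsf E_{\sup S}(t)$; (Fun) from $\Gamma\vdash t\equiv s$ and $\Gamma\vdash\mathsf E_l(t)$ infer $\Gamma\vdash\mathsf E_l(s)$. The deductive closure $\Lambda^{\vdash}$ of a theory $\Lambda$ is the smallest set of sequents containing $\Lambda$ and closed under all these rules; $\vdash_\Lambda\phi$ means $(\emptyset\vdash\phi)\in\Lambda^{\vdash}$. A $\Sigma$-algebra $\mathcal A=((A,\mu_A),\Sigma^{\mathcal A})$ is an $H$-fuzzy set $(A,\mu_A)$ together with, for each $f\in O$, an arrow $f^{\mathcal A}:(A,\mu_A)^{\mathrm{ar}(f)}\to(A,\mu_A)$ of $\mathbf{Fuz}_H$ and, for each $c\in C$, an element $c^{\mathcal A}\in A$. A morphism of $\Sigma$-algebras is an arrow of $\mathbf{Fuz}_H$ between the carriers preserving all constants and commuting with all operations. An assignment is a function $\iota:X\to A$; evaluation: $x^{\mathcal A,\iota}=\iota(x)$, $c^{\mathcal A,\iota}=c^{\mathcal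 A}$, $f(t_1,\dots,t_n)^{\mathcal A,\iota}=f^{\mathcal A}(t_1^{\mathcal A,\iota},\dots,t_n^{\mathcal A,\iota})$. $\mathcal A\vDash_\iota s\equiv t$ iff $s^{\mathcal A,\iota}=t^{\mathcal A,\iota}$; $\mathcal A\vDash_\iota\mathsf E_l(t)$ iff $l\le\mu_A(t^{\mathcal A,\iota})$. $\mathcal A$ satisfies $\Gamma\vdash\psi$ if for every assignment $\iota$ with $\mathcal A\vDash_\iota\phi$ for all $\phi\in\Gamma$ one has $\mathcal A\vDash_\iota\psi$. $\mathcal A$ is a model of a theory $\Lambda$ if it satisfies every sequent of $\Lambda$. $\mathbf{Mod}(\Lambda)$ is the full subcategory of the category of $\Sigma$-algebras on the models of $\Lambda$, and $\mathscr U_\Lambda:\mathbf{Mod}(\Lambda)\to\mathbf{Fuz}_H$ is the forgetful functor to carriers. *)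

From mathcomp Require Import all_boot.
Set Implicit Arguments.
Unset Strict Implicit.
Unset Printing Implicit Defensive.

Record frame := Frame {
  fcar :> Type;
  fle : fcar -> fcar -> Prop;
  fmeet : fcar -> fcar -> fcar;
  fsup : (fcar -> Prop) -> fcar;
  fle_refl : forall a, fle a a;
  fle_trans : forall a b c, fle a b -> fle b c -> fle a c;
  fle_antisym : forall a b, fle a b -> fle b a -> a = b;
  fmeet_l : forall a b, fle (fmeet a b) a;
  fmeet_r : forall a b, fle (fmeet a b) b;
  fmeet_glb : forall a b c, fle c a -> fle c b -> fle c (fmeet a b);
  fsup_ub : forall (S : fcar -> Prop) a, S a -> fle a (fsup S);
  fsup_lub : forall (S : fcar -> Prop) b, (forall a, S a -> fle a b) -> fle (fsup S) b;
  fdistr : forall a (S : fcar -> Prop),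
      fmeet a (fsup S) = fsup (fun c => exists2 s, S s & c = fmeet a s)
}.

Definition fbot (H : frame) : H := fsup (fun _ : H => False).
Definition ftop (H : frame) : H := fsup (fun _ : H => True).
Definition fbigmeet (H : frame) (n : nat) (l : 'I_n -> H) : H :=
  foldr (@fmeet H) (ftop H) (map l (enum 'I_n)).

Record signature := Signature {
  sig_O : Type;
  sig_ar : sig_O -> nat;
  sig_ar_pos : forall f, 0 < sig_ar f;
  sig_C : Type
}.

Record language := Language { lang_sig : signature; lang_X : Type }.

Section Syntax.
Variable L : language.
Local Notation O := (sig_O (lang_sig L)).
Local Notation ar := (@sig_ar (lang_sig L)).
Local Notation C := (sig_C (lang_sig L)).
Local Notation X := (lang_X L).

Inductive term : Type :=
| Tvar : X -> term
| Tcst : C -> term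
| Tapp : forall f : O, ('I_(ar f) -> term) -> term.
Arguments Tapp f ts : clear implicits.

Fixpoint tsubst (s : X -> term) (t : term) : term :=
  match t with
  | Tvar x => s x
  | Tcst c => Tcst c
  | Tapp f ts => Tapp f (fun i => tsubst s (ts i))
  end.

Variable H : frame.

Inductive formula : Type :=
| Feq : term -> term -> formula
| Fmem : H -> term -> formula.

Definition fsubst (s : X -> term) (phi : formula) : formula :=
  match phi with
  | Feq a b => Feq (tsubst s a) (tsubst s b)
  | Fmem l a => Fmem l (tsubst s a)
  end.

Definition fset_subst (s : X -> term) (G : formula -> Prop) : formula -> Prop :=
  fun psi => exists2 phi, G phi & psi = fsubst s phi.

(* a fuzzy theory: a set of sequents (Gamma |- psi) *)
Definition theory := (formula -> Prop) -> formula -> Prop.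

Inductive derivable (Lam : theory) : (formula -> Prop) -> formula -> Prop :=
| d_theory : forall G psi, Lam G psi -> derivable Lam G psi
| d_A : forall (G : formula -> Prop) phi, G phi -> derivable Lam G phi
| d_Weak : forall G D phi, derivable Lam G phi ->
    derivable Lam (fun x => G x \/ D x) phi
| d_Cut : forall G (P : formula -> Prop) psi,
    (forall phi, P phi -> derivable Lam G phi) -> derivable Lam P psi ->
    derivable Lam G psi
| d_Refl : forall G s, derivable Lam G (Feq s s)
| d_Sym : forall G s t, derivable Lam G (Feq s t) -> derivable Lam G (Feq t s)
| d_Trans : forall G s t u, derivable Lam G (Feq s t) -> derivable Lam G (Feq t u) ->
    derivable Lam G (Feq s u)
| d_Sub : forall G psi (s : X -> term), derivable Lam G psi ->
    derivable Lam (fset_subst s G) (fsubst s psi)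
| d_Cong : forall G (f : O) (ts ss : 'I_(ar f) -> term),
    (forall i, derivable Lam G (Feq (ts i) (ss i))) ->
    derivable Lam G (Feq (Tapp f ts) (Tapp f ss))
| d_Inf : forall G t, derivable Lam G (Fmem (fbot H) t)
| d_Mon : forall G l l' t, derivable Lam G (Fmem l t) ->
    derivable Lam G (Fmem (fmeet l l') t)
| d_Exp : forall G (f : O) (ls : 'I_(ar f) -> H) (ts : 'I_(ar f) -> term),
    (forall i, derivable Lam G (Fmem (ls i) (ts i))) ->
    derivable Lam G (Fmem (fbigmeet ls) (Tapp f ts))
| d_Sup : forall G (S : H -> Prop) t,
    (forall l, S l -> derivable Lam G (Fmem l t)) ->
    derivable Lam G (Fmem (fsup S) t)
| d_Fun : forall G t s l, derivable Lam G (Feq t s) -> derivable Lam G (Fmem l t) ->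
    derivable Lam G (Fmem l s).

Definition provable (Lam : theory) (phi : formula) : Prop :=
  derivable Lam (fun _ => False) phi.

Record algebra := Algebra {
  acar :> Type;
  amu : acar -> H;
  aop : forall f : O, ('I_(ar f) -> acar) -> acar;
  acst : C -> acar;
  (* each f^A is an arrow (A,mu)^n -> (A,mu) of Fuz_H *)
  aop_arrow : forall f (a : 'I_(ar f) -> acar),
      fle (fbigmeet (fun i => amu (a i))) (amu (@aop f a))
}.
Arguments aop : clear implicits.
Arguments amu : clear implicits.
Arguments acst : clear implicits.

Fixpoint eval (A : algebra) (io : X -> A) (t : term) : A :=
  match t with
  | Tvar x => io x
  | Tcst c => acst A c
  | Tapp f ts => aop A f (fun i => eval io (ts i))
  end.

Definition sat (A : algebra) (io : X -> A) (phi : formula) : Prop :=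
  match phi with
  | Feq s t => eval io s = eval io t
  | Fmem l t => fle l (amu A (eval io t))
  end.

Definition sat_sequent (A : algebra) (G : formula -> Prop) (psi : formula) : Prop :=
  forall io : X -> A, (forall phi, G phi -> sat io phi) -> sat io psi.

Definition is_model (Lam : theory) (A : algebra) : Prop :=
  forall G psi, Lam G psi -> sat_sequent A G psi.

Definition is_morphism (A B : algebra) (h : A -> B) : Prop :=
  [/\ forall x, fle (amu A x) (amu B (h x)),
      forall c, h (acst A c) = acst B c &
      forall f (a : 'I_(ar f) -> A), h (aop A f a) = aop B f (fun i => h (a i))].

(* eta : nabla(X) -> U_Lambda(F) is a universal arrow from nabla(X) = (X, const bot)
   to the forgetful functor U_Lambda : Mod(Lambda) -> Fuz_H, i.e. the component at
   nabla(X) of the unit of a left adjoint F_Lambda -| U_Lambda. *)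
Definition universal_arrow (Lam : theory) (F : algebra) (eta : X -> F) : Prop :=
  (forall x, fle (fbot H) (amu F (eta x))) /\
  forall B : algebra, is_model Lam B ->
  forall g : X -> B, (forall x, fle (fbot H) (amu B (g x))) ->
    (exists h : F -> B, is_morphism h /\ forall x, h (eta x) = g x) /\
    (forall h1 h2 : F -> B,
        is_morphism h1 -> (forall x, h1 (eta x) = g x) ->
        is_morphism h2 -> (forall x, h2 (eta x) = g x) ->
        forall y, h1 y = h2 y).

End Syntax.

From mathcomp Require Import all_boot.
From Stdlib Require Import FunctionalExtensionality PropExtensionality ProofIrrelevance ClassicalEpsilon.

(* Soundness gives one direction. For the other, terms modulo provable equality,
   with membership degree the supremum of the provably attained degrees, form a
   model of [Lam] in which the generic assignment [x |-> [x]] satisfies exactly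
   the provable formulas. The universal property of [iota_nat] yields a
   morphism from [F] to this term model sending [iota_nat] to the generic
   assignment, and morphisms preserve satisfaction of equations and
   memberships. *)

Lemma fbot_le (H : frame) (a : H) : fle (fbot H) a.
Proof. by apply: fsup_lub => _ []. Qed.

Lemma fbigmeet_mono (H : frame) n (l l' : 'I_n -> H) :
  (forall i, fle (l i) (l' i)) -> fle (fbigmeet l) (fbigmeet l').
Proof.
rewrite /fbigmeet => le_ll'; elim: (enum 'I_n) => [|i s IHs] /=.
  exact: fle_refl.
apply: fmeet_glb; first exact: fle_trans (fmeet_l _ _) (le_ll' i).
exact: fle_trans (fmeet_r _ _) IHs.
Qed.

Section Semantics.
Context {H : frame} {L : language}.

Lemma tsubst_Tvar (t : term L) : tsubst (@Tvar L) t = t.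
Proof.
elim: t => [x|c|f ts IHts] //=.
by congr (Tapp _); apply: functional_extensionality => i; apply: IHts.
Qed.

Lemma eval_tsubst (A : algebra L H) (io : lang_X L -> A) s t :
  eval io (tsubst s t) = eval (fun x => eval io (s x)) t.
Proof.
elim: t => [x|c|f ts IHts] //=.
by f_equal; apply: functional_extensionality => i; apply: IHts.
Qed.

Lemma sat_fsubst (A : algebra L H) (io : lang_X L -> A) s phi :
  sat io (fsubst s phi) <-> sat (fun x => eval io (s x)) phi.
Proof. by case: phi => [a b|l a] /=; rewrite !eval_tsubst. Qed.

Lemma soundness {Lam : theory L H} {A : algebra L H} {G psi} :
  is_model Lam A -> derivable Lam G psi -> sat_sequent A G psi.
Proof.
move=> modelA; elim=> {G psi} /=.
- by move=> G psi /modelA.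
- by move=> G phi Gphi io sat_G; apply: sat_G.
- by move=> G D phi _ IH io sat_GD; apply: IH => phi' G_phi'; apply: sat_GD; left.
- by move=> G P psi _ IHP _ IH io sat_G; apply: IH => phi /IHP; apply.
- by [].
- by move=> G s t _ IH io /IH /= ->.
- by move=> G s t u _ IH1 _ IH2 io sat_G /=; rewrite (IH1 io sat_G) (IH2 io sat_G).
- move=> G psi s _ IH io sat_sG; apply/sat_fsubst; apply: IH => phi G_phi.
  by apply/sat_fsubst; apply: sat_sG; exists phi.
- move=> G f ts ss _ IH io sat_G /=.
  by f_equal; apply: functional_extensionality => i; apply: IH.
- by move=> G t io _; apply: fbot_le.
- by move=> G l l' t _ IH io /IH le_l; apply: fle_trans (fmeet_l _ _) le_l.
- move=> G f ls ts _ IH io sat_G /=; apply: fle_trans _ (aop_arrow _).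
  by apply: fbigmeet_mono => i; apply: IH.
- by move=> G S t _ IH io sat_G /=; apply: fsup_lub => l Sl; apply: IH.
- by move=> G t s l _ IHeq _ IHmem io sat_G /=; rewrite -(IHeq io sat_G); apply: IHmem.
Qed.

Lemma eval_morphism {A B : algebra L H} {h : A -> B} :
  is_morphism h -> forall (io : lang_X L -> A) t, h (eval io t) = eval (fun x => h (io x)) t.
Proof.
case=> _ h_cst h_op io t; elim: t => [x|c|f ts IHts] //=.
by rewrite h_op; f_equal; apply: functional_extensionality => i; apply: IHts.
Qed.

Lemma sat_morphism (A B : algebra L H) (h : A -> B) (io : lang_X L -> A) phi :
  is_morphism h -> sat io phi -> sat (fun x => h (io x)) phi.
Proof.
move=> hom; case: phi => [s t|l t] /=; rewrite -!(eval_morphism hom).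
  by move->.
by case: hom => h_mu _ _ le_l; apply: fle_trans le_l (h_mu _).
Qed.

End Semantics.

Section TermModel.
Context {H : frame} {L : language} (Lam : theory L H).

Notation provable_eq t u := (provable Lam (Feq H t u)).

Lemma provable_mem_le {l m : H} {t : term L} :
  fle l m -> provable Lam (Fmem m t) -> provable Lam (Fmem l t).
Proof.
move=> le_lm prov_m; have <- : fmeet m l = l.
  by apply: fle_antisym; [apply: fmeet_r | apply: fmeet_glb => //; apply: fle_refl].
exact: d_Mon.
Qed.

Lemma provable_tsubst_eq {s1 s2 : lang_X L -> term L} t :
  (forall x, provable_eq (s1 x) (s2 x)) -> provable_eq (tsubst s1 t) (tsubst s2 t).
Proof.
move=> eq_s; elim: t => [x|c|f ts IHts] /=; [exact: eq_s | exact: d_Refl |].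
exact: d_Cong.
Qed.

Definition eq_class (t : term L) : term L -> Prop := fun u => provable_eq t u.

Definition term_quot := {P : term L -> Prop | exists t, P = eq_class t}.

Definition class_of (t : term L) : term_quot := exist _ (eq_class t) (ex_intro _ t erefl).

Definition repr (a : term_quot) : term L :=
  proj1_sig (constructive_indefinite_description _ (proj2_sig a)).

Lemma eq_classE t u : eq_class t = eq_class u <-> provable_eq t u.
Proof.
split=> [eq_tu | prov_tu].
  have : eq_class t t by apply: d_Refl.
  by rewrite eq_tu; apply: d_Sym.
apply: functional_extensionality => v; apply: propositional_extensionality.
by split; [apply: d_Trans (d_Sym prov_tu) | apply: d_Trans prov_tu].
Qed.

Lemma term_quot_inj {a b : term_quot} : proj1_sig a = proj1_sig b -> a = b.
Proof. by case: a b => [P p] [Q q] /= eq_PQ; subst Q; rewrite (proof_irrelevance _ p q). Qed.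

Lemma class_of_eq t u : class_of t = class_of u <-> provable_eq t u.
Proof.
rewrite -eq_classE; split=> [/(congr1 (@proj1_sig _ _)) // | eq_tu].
exact: term_quot_inj.
Qed.

Lemma repr_spec (a : term_quot) : proj1_sig a = eq_class (repr a).
Proof. by rewrite /repr; case: constructive_indefinite_description. Qed.

Lemma class_of_repr a : class_of (repr a) = a.
Proof. by apply: term_quot_inj; rewrite (repr_spec a). Qed.

Lemma repr_class_of t : provable_eq (repr (class_of t)) t.
Proof. by apply/d_Sym/eq_classE; rewrite -repr_spec. Qed.

Definition term_deg (a : term_quot) : H :=
  fsup (fun l => provable Lam (Fmem l (repr a))).

Lemma provable_deg a : provable Lam (Fmem (term_deg a) (repr a)).
Proof. exact: d_Sup. Qed.

Definition term_op (f : sig_O (lang_sig L)) (a : 'I_(sig_ar f) -> term_quot) : term_quot :=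
  class_of (Tapp (fun i => repr (a i))).

Lemma term_op_arrow (f : sig_O (lang_sig L)) (a : 'I_(sig_ar f) -> term_quot) :
  fle (fbigmeet (fun i => term_deg (a i))) (term_deg (term_op f a)).
Proof.
apply: fsup_ub; apply: d_Fun (d_Sym (repr_class_of _)) _.
by apply: d_Exp => i; apply: provable_deg.
Qed.

Definition term_algebra : algebra L H :=
  @Algebra L H term_quot term_deg term_op (fun c => class_of (Tcst c)) term_op_arrow.

Lemma eval_term_algebra (io : lang_X L -> term_algebra) t :
  eval io t = class_of (tsubst (fun x => repr (io x)) t).
Proof.
elim: t => [x|c|f ts IHts] /=; [by rewrite class_of_repr | by [] |].
rewrite (functional_extensionality _ _ IHts); apply/class_of_eq.
by apply: d_Cong => i; apply: repr_class_of.
Qed.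

Lemma sat_term_algebra (io : lang_X L -> term_algebra) phi :
  sat io phi <-> provable Lam (fsubst (fun x => repr (io x)) phi).
Proof.
case: phi => [s t|l t] /=; rewrite ?eval_term_algebra; first exact: class_of_eq.
split=> [le_l | prov_l].
  exact: d_Fun (repr_class_of _) (provable_mem_le le_l (provable_deg _)).
exact/fsup_ub/(d_Fun (d_Sym (repr_class_of _))).
Qed.

Lemma term_algebra_model : is_model Lam term_algebra.
Proof.
move=> G psi Lam_G_psi io sat_G; apply/sat_term_algebra.
apply: (d_Cut (P := fset_subst (fun x => repr (io x)) G)).
  by move=> _ [phi G_phi ->]; apply/sat_term_algebra/sat_G.
exact/d_Sub/d_theory.
Qed.

Lemma sat_generic phi :
  sat (A := term_algebra) (fun x => class_of (Tvar x)) phi <-> provable Lam phi.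
Proof.
rewrite sat_term_algebra.
have eq_t t : provable_eq (tsubst (fun x => repr (class_of (Tvar x))) t) t.
  by rewrite -{2}(tsubst_Tvar t); apply: provable_tsubst_eq => x; apply: repr_class_of.
case: phi => [s t|l t] /=; split=> prov.
- exact: d_Trans (d_Trans (d_Sym (eq_t s)) prov) (eq_t t).
- exact: d_Trans (eq_t s) (d_Trans prov (d_Sym (eq_t t))).
- exact: d_Fun (eq_t t) prov.
- exact: d_Fun (d_Sym (eq_t t)) prov.
Qed.

End TermModel.

Theorem lemma37 (H : frame) (L : language) (Lam : theory L H)
  (F : algebra L H) (HF : is_model Lam F)
  (iota_nat : lang_X L -> F) (Hunit : universal_arrow Lam iota_nat)
  (phi : formula L H) :
  sat iota_nat phi <-> provable Lam phi.
Proof.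
split=> [sat_phi | prov_phi]; last first.
  exact: soundness HF prov_phi iota_nat (fun _ => False_ind _).
have [[h [hom h_iota]] _] := Hunit.2 _ (term_algebra_model Lam)
  (fun x => class_of Lam (Tvar x)) (fun _ => fbot_le _ _).
apply/sat_generic; rewrite -(functional_extensionality _ _ h_iota).
exact: sat_morphism hom sat_phi.
Qed.
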